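(* Let $(P_{ij})$ be an $(m+1)\times(d+1)$ non-negative matrix (indices $i\in\{0,\dots,m\}$, $j\in\{0,\dots,d\}$, $d\ge1$) with $\sum_iP_{ij}=1$ for all $j$, and let $P:\mathbb{R}^{d+1}_0\to\mathbb{R}^{m+1}_0$ be the associated linear map. Suppose there exists $\theta>0$ such that for every pair $j_1,j_2\in\{0,\dots,d\}$ there exists $i_0\in\{0,\dots,m\}$ with $P_{i_0j_1}\ge\theta$ and $P_{i_0j_2}\ge\theta$. Then the operator norm satisfies $\|P\|\le 1-\theta/d$.
   Context: $\mathbb{R}^n$ carries the $L^1$ norm $\|a\|=\sum_i|a_i|$, and $\mathbb{R}^n_0=\{a\in\mathbb{R}^n:\sum_ia_i=0\}$. Since column sums of $P$ are $1$, $P$ maps $\mathbb{R}^{d+1}_0$ into $\mathbb{R}^{m+1}_0$; the norm is taken with respect to the $L^1$ norms on these subspaces. *)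

From HB Require Import structures.
From mathcomp Require Import all_boot all_order all_algebra.
Set Implicit Arguments. Unset Strict Implicit. Unset Printing Implicit Defensive.
Import Order.TTheory GRing.Theory Num.Theory.
Local Open Scope ring_scope.

Definition l1norm (R : numDomainType) (n : nat) (a : 'cV[R]_n) : R :=
  \sum_(i < n) `|a i 0|.

Definition zero_sum (R : numDomainType) (n : nat) (a : 'cV[R]_n) : Prop :=
  \sum_(i < n) a i 0 = 0.

(* ||P|| <= c, where ||.|| is the operator norm of the linear map
   a |-> P a from R^n_0 to R^m_0, both carrying the L^1 norm:
   i.e. ||P a||_1 <= c ||a||_1 for every a in R^n_0. *)
Definition opnorm0_le (R : numDomainType) (m n : nat)
    (P : 'M[R]_(m, n)) (c : R) : Prop :=
  forall a : 'cV[R]_n, zero_sum a -> l1norm (P *m a) <= c * l1norm a.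

From HB Require Import structures.
From mathcomp Require Import all_boot all_order all_algebra.
From mathcomp Require Import ring lra.
Import Order.TTheory GRing.Theory Num.Theory.
Set Implicit Arguments.
Unset Strict Implicit.
Local Open Scope ring_scope.

(* Write a zero-sum vector as a = a^+ - a^-, where a^+ and a^- both have mass
   s = ||a|| / 2. As the columns P_j of P are probability vectors,
   s (P a)_i = sum_(j,k) a^+_j a^-_k (P_ij - P_ik), hence
   s ||P a|| <= sum_(j,k) a^+_j a^-_k ||P_j - P_k||. Two columns sharing a
   row where both are at least theta are at L^1 distance at most 2 - 2 theta,
   so ||P a|| <= (1 - theta) ||a||, which is even better than 1 - theta / d. *)

Section FiniteFamilies.
Variable R : realFieldType.

Definition pos_part (x : R) : R := Num.max x 0.
Definition neg_part (x : R) : R := Num.max (- x) 0.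

Lemma pos_part_ge0 x : 0 <= pos_part x.
Proof. by rewrite /pos_part le_max lexx orbT. Qed.

Lemma neg_part_ge0 x : 0 <= neg_part x.
Proof. by rewrite /neg_part le_max lexx orbT. Qed.

Lemma pos_partBneg_part x : pos_part x - neg_part x = x.
Proof.
by rewrite /pos_part /neg_part !maxEle; case: (lerP x 0); case: (lerP (- x) 0);
  lra.
Qed.

Lemma pos_partDneg_part x : pos_part x + neg_part x = `|x|.
Proof.
rewrite /pos_part /neg_part !maxEle.
case: (lerP 0 x) => hx; [rewrite ger0_norm // | rewrite ltr0_norm //].
all: by case: (lerP x 0); case: (lerP (- x) 0); lra.
Qed.

Variable I : finType.
Implicit Types a p : I -> R.

Lemma sum_neg_part a : \sum_i a i = 0 ->
  \sum_i neg_part (a i) = \sum_i pos_part (a i).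
Proof.
move=> a0; apply/eqP; rewrite eq_sym -subr_eq0 -sumrB; apply/eqP.
by rewrite -[RHS]a0; apply: eq_bigr => i _; rewrite pos_partBneg_part.
Qed.

Lemma sum_norm_zero_sum a : \sum_i a i = 0 ->
  \sum_i `|a i| = 2 * \sum_i pos_part (a i).
Proof.
move=> a0; under eq_bigr do rewrite -pos_partDneg_part.
by rewrite big_split /= sum_neg_part // mulr2n mulrDl mul1r.
Qed.

Lemma sum_pos_part_mul_dot a p : \sum_i a i = 0 ->
  (\sum_i pos_part (a i)) * \sum_j p j * a j =
  \sum_j \sum_k pos_part (a j) * neg_part (a k) * (p j - p k).
Proof.
move=> a0; set s := \sum_i pos_part (a i).
have sum_neg : \sum_k neg_part (a k) = s by exact: sum_neg_part.
transitivity (\sum_j \sum_k pos_part (a j) * neg_part (a k) * p j -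
              \sum_k \sum_j pos_part (a j) * neg_part (a k) * p k); last first.
  rewrite [X in _ - X = _]exchange_big -sumrB; apply: eq_bigr => j _.
  by rewrite -sumrB; apply: eq_bigr => k _; rewrite mulrBr.
have -> : \sum_j \sum_k pos_part (a j) * neg_part (a k) * p j =
          s * \sum_j p j * pos_part (a j).
  rewrite mulr_sumr; apply: eq_bigr => j _.
  by rewrite -sum_neg mulr_suml; apply: eq_bigr => k _; ring.
have -> : \sum_k \sum_j pos_part (a j) * neg_part (a k) * p k =
          s * \sum_k p k * neg_part (a k).
  rewrite mulr_sumr; apply: eq_bigr => k _.
  by rewrite mulr_suml; apply: eq_bigr => j _; ring.
rewrite -mulrBr -sumrB; congr (_ * _); apply: eq_bigr => j _.
by rewrite -mulrBr pos_partBneg_part.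
Qed.

(* The overlap at i0 is counted in both masses but cancels in |u - v|. *)
Lemma sum_normB_le_overlap (u v : I -> R) i0 theta :
  (forall i, 0 <= u i) -> (forall i, 0 <= v i) ->
  \sum_i u i = 1 -> \sum_i v i = 1 ->
  theta <= u i0 -> theta <= v i0 ->
  \sum_i `|u i - v i| <= 2 - 2 * theta.
Proof.
move=> u0 v0 u1 v1 hu hv.
have normB_le (x y : R) : 0 <= x -> 0 <= y -> `|x - y| <= x + y.
  by case: (lerP 0 (x - y)) => h; [rewrite ger0_norm | rewrite ltr0_norm];
    lra.
have normB_i0 : `|u i0 - v i0| <= u i0 + v i0 - 2 * theta.
  by case: (lerP 0 (u i0 - v i0)) => h; [rewrite ger0_norm | rewrite ltr0_norm];
    lra.
have rest : \sum_(i | i != i0) `|u i - v i| <= \sum_(i | i != i0) (u i + v i).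
  by apply: ler_sum => i _; exact: normB_le.
have -> : 2 - 2 * theta = \sum_i (u i + v i) - 2 * theta.
  by rewrite big_split /= u1 v1.
rewrite (bigD1 i0) //= [X in _ <= X - _](bigD1 i0) //=; lra.
Qed.

End FiniteFamilies.

Section ColumnStochastic.
Variables (R : realFieldType) (m n : nat) (P : 'M[R]_(m, n)).
Hypothesis P_ge0 : forall i j, 0 <= P i j.
Hypothesis P_col_sum : forall j, \sum_i P i j = 1.

Lemma l1norm_mulmx_le a : l1norm (P *m a) <= l1norm a.
Proof.
rewrite /l1norm.
apply: (le_trans (y := \sum_i \sum_j P i j * `|a j 0|)).
  apply: ler_sum => i _; rewrite mxE.
  apply: (le_trans (ler_norm_sum _ _ _)); apply: ler_sum => j _.
  by rewrite normrM ger0_norm.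
rewrite exchange_big; apply: ler_sum => j _.
by rewrite -mulr_suml P_col_sum mul1r.
Qed.

Lemma pos_mass_mul_l1norm_mulmx_le theta (a : 'cV[R]_n) :
  (forall j1 j2, exists i0, theta <= P i0 j1 /\ theta <= P i0 j2) ->
  \sum_j a j 0 = 0 ->
  (\sum_j pos_part (a j 0)) * l1norm (P *m a) <=
    (2 - 2 * theta) * (\sum_j pos_part (a j 0)) ^+ 2.
Proof.
move=> overlap a0; set s := \sum_j pos_part (a j 0); rewrite expr2.
set ap := fun j => pos_part (a j 0); set an := fun j => neg_part (a j 0).
have s_ge0 : 0 <= s by apply: sumr_ge0 => j _; exact: pos_part_ge0.
have apan_ge0 j k : 0 <= ap j * an k.
  by apply: mulr_ge0; [exact: pos_part_ge0 | exact: neg_part_ge0].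
rewrite /l1norm mulr_sumr.
apply: (le_trans (y := \sum_i \sum_j \sum_k ap j * an k * `|P i j - P i k|)).
  apply: ler_sum => i _; rewrite -[s]ger0_norm // -normrM mxE.
  rewrite sum_pos_part_mul_dot //.
  apply: (le_trans (ler_norm_sum _ _ _)); apply: ler_sum => j _.
  apply: (le_trans (ler_norm_sum _ _ _)); apply: ler_sum => k _.
  by rewrite normrM ger0_norm ?apan_ge0.
rewrite exchange_big /=.
apply: (le_trans (y := \sum_j \sum_k ap j * an k * (2 - 2 * theta))).
  apply: ler_sum => j _; rewrite exchange_big /=; apply: ler_sum => k _.
  rewrite -mulr_sumr; apply: ler_wpM2l; first exact: apan_ge0.
  have [i0 [hj hk]] := overlap j k.
  exact: sum_normB_le_overlap (P_ge0^~ j) (P_ge0^~ k)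
    (P_col_sum j) (P_col_sum k) hj hk.
have -> : \sum_j \sum_k ap j * an k * (2 - 2 * theta) =
          (\sum_j ap j) * (\sum_k an k) * (2 - 2 * theta).
  rewrite !mulr_suml; apply: eq_bigr => j _.
  by rewrite mulr_sumr mulr_suml.
by rewrite sum_neg_part // -/s mulrC.
Qed.

Lemma opnorm0_le_overlap theta :
  (forall j1 j2, exists i0, theta <= P i0 j1 /\ theta <= P i0 j2) ->
  opnorm0_le P (1 - theta).
Proof.
move=> overlap a a0.
have := pos_mass_mul_l1norm_mulmx_le overlap a0.
have := sum_norm_zero_sum a0; rewrite -/(l1norm a).
set s := \sum_j pos_part (a j 0) => norm_a; rewrite expr2 => mixing.
have s_ge0 : 0 <= s by apply: sumr_ge0 => j _; exact: pos_part_ge0.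
case: (lerP s 0) => hs.
  have s0 : s = 0 by apply/eqP; rewrite eq_le hs s_ge0.
  have := l1norm_mulmx_le a; rewrite norm_a s0; lra.
have : l1norm (P *m a) <= (2 - 2 * theta) * s by rewrite -(ler_pM2l hs); lra.
rewrite norm_a; lra.
Qed.

End ColumnStochastic.

Lemma opnorm0_le_trans (R : numDomainType) (m n : nat) (P : 'M[R]_(m, n)) c c' :
  opnorm0_le P c -> c <= c' -> opnorm0_le P c'.
Proof.
move=> hc le_cc' a a0; apply: le_trans (hc a a0) _.
by apply: ler_wpM2r => //; apply: sumr_ge0.
Qed.

Theorem lemma4p6 (R : realFieldType) (m d : nat) (P : 'M[R]_(m.+1, d.+1))
  (theta : R) :
  (1 <= d)%N ->
  (forall i j, 0 <= P i j) ->
  (forall j, \sum_(i < m.+1) P i j = 1) ->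
  0 < theta ->
  (forall j1 j2 : 'I_d.+1, exists i0 : 'I_m.+1,
      theta <= P i0 j1 /\ theta <= P i0 j2) ->
  opnorm0_le P (1 - theta / d%:R).
Proof.
move=> d_ge1 P_ge0 P_col_sum theta_gt0 overlap.
apply: opnorm0_le_trans (opnorm0_le_overlap P_ge0 P_col_sum overlap) _.
have d_ge1R : 1 <= d%:R :> R by rewrite ler1n.
rewrite lerD2l lerN2 ler_pdivrMr ?(lt_le_trans ltr01) //.
by rewrite ler_peMr // ltW.
Qed.
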